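(* For every $n\ge1$ and $0\le m<n$, $$S_{n,m}(0121,0132)=S_{n,m}(0121,1032)=S_{n,m}(0122,0132)=S_{n,m}(0122,1032).$$
   Context: An ascent in a sequence $x_1\cdots x_k$ is an index $j$ with $x_j<x_{j+1}$; $\mathrm{asc}$ denotes the number of ascents. An ascent sequence of length $n$ is a sequence $x_1\cdots x_n$ of non-negative integers with $x_1=0$ and $x_i\le \mathrm{asc}(x_1\cdots x_{i-1})+1$ for $1<i\le n$. A sequence $\pi$ contains a pattern $\tau$ (a sequence of non-negative integers) if some subsequence of $\pi$ is order-isomorphic to $\tau$ (same relative order, equal letters to equal letters); otherwise it avoids $\tau$. $\mathcal{S}_{n,m}(T)$ is the set of ascent sequences of length $n$ with exactly $m$ ascents avoiding all patterns in $T$, and $S_{n,m}(T)$ its cardinality. *)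

From mathcomp Require Import all_boot.
Set Implicit Arguments. Unset Strict Implicit. Unset Printing Implicit Defensive.

Fixpoint asc (s : seq nat) : nat :=
  match s with
  | x :: ((y :: _) as t) => (x < y) + asc t
  | _ => 0
  end.

(* ascent sequence: x_1 = 0 and x_i <= asc(x_1..x_{i-1}) + 1 for 1 < i <= n
   (0-based: index i in 1..size-1, prefix take i s).  The empty sequence is not one. *)
Definition is_ascent_seq (s : seq nat) : bool :=
  (head 1 s == 0) &&
  all (fun i => nth 0 s i <= (asc (take i s)).+1) (iota 1 (size s).-1).

Definition order_iso (s t : seq nat) : bool :=
  (size s == size t) &&
  all (fun i => all (fun j =>
     ((nth 0 s i < nth 0 s j) == (nth 0 t i < nth 0 t j)) &&
     ((nth 0 s i == nth 0 s j) == (nth 0 t i == nth 0 t j)))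
     (iota 0 (size s))) (iota 0 (size s)).

Fixpoint bitseqs (k : nat) : seq bitseq :=
  if k is k'.+1 then [seq b :: m | b <- [:: true; false], m <- bitseqs k'] else [:: [::]].

Definition contains (pi tau : seq nat) : bool :=
  has (fun m => order_iso (mask m pi) tau) (bitseqs (size pi)).

Definition avoids (pi tau : seq nat) : bool := ~~ contains pi tau.

Fixpoint all_seqs (b n : nat) : seq (seq nat) :=
  if n is n'.+1 then [seq x :: s | x <- iota 0 b, s <- all_seqs b n'] else [:: [::]].

(* Every ascent sequence of length n has entries <= n - 1 < n,
   so all_seqs n n enumerates (without repetition) a superset of them. *)
Definition Snm_set (n m : nat) (T : seq (seq nat)) : seq (seq nat) :=
  [seq s <- all_seqs n n | is_ascent_seq s && (asc s == m) && all (avoids s) T].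

Definition Snm (n m : nat) (T : seq (seq nat)) : nat := size (Snm_set n m T).

(* In an ascent sequence every entry larger than 1 is preceded by a 0 and a 1.
   Hence, among ascent sequences, avoiding 0132 means that the entries larger
   than 1 weakly increase; avoiding 0121 as well means that all positive entries
   weakly increase, and avoiding 0122 as well means that the entries larger than 1
   strictly increase.  Under either extra condition, 0132 and 1032 are avoided
   together: given entries d > c > 1 in this order, look at the first entry that
   is at least c.  If the entries before it weakly increase, the ascent bound
   forces it to be c, so c d c occurs, and with the leading 0 1 it yields both
   0121 and 0122; otherwise the entries before it contain a descent below c,
   which together with d c is an occurrence of 1032.
   Finally, turning every 1 that follows some entry h > 1 into a copy of the
   latest such h is an ascent-preserving bijection from the strictly to the
   weakly increasing class. *)

From mathcomp Require Import all_boot zify.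
Set Implicit Arguments. Unset Strict Implicit. Unset Printing Implicit Defensive.

Lemma rcons_neq_nil (T : eqType) (u : seq T) x : rcons u x != [::].
Proof. by case: u. Qed.

Lemma subseq_cons_cat (T : eqType) (x : T) u s : subseq (x :: u) s ->
  exists s1 s2, s = s1 ++ x :: s2 /\ subseq u s2.
Proof.
elim: s => [|y s IH] //=.
case: eqP => [<- H|_ /IH [s1 [s2 [-> H]]]]; first by exists [::], s.
by exists (y :: s1), s2.
Qed.

Lemma subseq_cons_catr (T : eqType) (x : T) t u v : x \notin u ->
  subseq (x :: t) (u ++ v) -> subseq (x :: t) v.
Proof. by elim: u => //= y u IH; rewrite inE negb_or => /andP[/negbTE ->]. Qed.

Lemma unsorted_pair (T : eqType) (r : rel T) t :
  ~~ sorted r t -> exists x y, subseq [:: x; y] t /\ ~~ r x y.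
Proof.
elim: t => [|x [|y t] IH] //; rewrite [sorted _ _]/=.
have [Hxy /IH [a [b [Hs Hr]]]|Hxy _] := boolP (r x y).
  by exists a, b; split => //; apply: subseq_trans Hs (subseq_cons _ _).
by exists x, y; rewrite /= !eqxx sub0seq.
Qed.

Lemma sorted_pair (T : eqType) (r : rel T) t x y : transitive r -> sorted r t ->
  subseq [:: x; y] t -> r x y.
Proof. by move=> Hr Ht /(subseq_sorted Hr) /(_ Ht) /andP[]. Qed.

Lemma sorted_leq_rcons l y : sorted leq (rcons l y) = sorted leq l && (last 0 l <= y).
Proof. by case: l => [|a l] //=; rewrite rcons_path. Qed.

Lemma eq_size_bij_in (T : eqType) (A B : seq T) f g : uniq A -> uniq B ->
  {in A, forall s, f s \in B} -> {in B, forall s, g s \in A} ->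
  {in A, cancel f g} -> {in B, cancel g f} -> size A = size B.
Proof.
move=> UA UB fAB gBA fK gK; apply/eqP; rewrite eqn_leq.
apply/andP; split; [rewrite -(size_map f) | rewrite -(size_map g)].
  apply: uniq_leq_size; first by rewrite map_inj_in_uniq //; apply: can_in_inj fK.
  by move=> _ /mapP [s Hs ->]; apply: fAB.
apply: uniq_leq_size; first by rewrite map_inj_in_uniq //; apply: can_in_inj gK.
by move=> _ /mapP [s Hs ->]; apply: gBA.
Qed.

Lemma mem_bitseqs k m : size m = k -> m \in bitseqs k.
Proof.
elim: k m => [|k IH] [|b m] // [Hm]; rewrite [bitseqs _]/=.
by case: b; rewrite !mem_cat map_f ?orbT ?IH.
Qed.

Lemma mem_all_seqs b n s :
  (s \in all_seqs b n) = (size s == n) && all (fun x => x < b) s.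
Proof.
elim: n s => [|n IH] s; first by case: s.
apply/allpairsPdep/idP => [[y [t [Hy Ht ->]]]|].
  by move: Hy Ht; rewrite mem_iota IH /= eqSS => -> /andP[-> ->].
case: s => // x s /= /andP[Hs /andP[Hx Ha]].
by exists x, s; rewrite mem_iota IH -eqSS Hs.
Qed.

Lemma uniq_all_seqs b n : uniq (all_seqs b n).
Proof.
elim: n => [|n IH] //=.
apply: allpairs_uniq_dep => //; first exact: iota_uniq.
by move=> [x s] [y t] _ _ /= [-> ->].
Qed.

Lemma order_isoP s t :
  reflect (size s = size t /\ forall i j, i < size s -> j < size s ->
             ((nth 0 s i < nth 0 s j) = (nth 0 t i < nth 0 t j)) /\
             ((nth 0 s i == nth 0 s j) = (nth 0 t i == nth 0 t j)))
          (order_iso s t).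
Proof.
apply: (iffP andP) => [[/eqP Hs /allP H]|[Hs H]]; split => //.
- move=> i j Hi Hj.
  have /H/allP/(_ j) : i \in iota 0 (size s) by rewrite mem_iota.
  by rewrite mem_iota => /(_ Hj) /andP[/eqP -> /eqP ->].
- by apply/eqP.
apply/allP => i; rewrite mem_iota => Hi; apply/allP => j; rewrite mem_iota => Hj.
by have [-> ->] := H i j Hi Hj; rewrite !eqxx.
Qed.

Lemma containsP pi tau :
  reflect (exists2 f : nat -> nat, {in tau &, {mono f : x y / x < y}}
                                 & subseq (map f tau) pi)
          (contains pi tau).
Proof.
apply: (iffP hasP) => [[msk _ /order_isoP[Hsz Hiso]]|[f Hf /subseqP[msk Hsz Hmsk]]].
  set t := mask msk pi in Hsz Hiso.
  have index_lt y : y \in tau -> index y tau < size t by rewrite Hsz index_mem.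
  pose f y := nth 0 t (index y tau); exists f.
    move=> x y Hx Hy /=; have [-> _] := Hiso _ _ (index_lt x Hx) (index_lt y Hy).
    by rewrite !nth_index.
  suff -> : map f tau = t by apply: mask_subseq.
  apply: (@eq_from_nth _ 0) => [|i Hi]; first by rewrite size_map.
  rewrite size_map -Hsz in Hi; rewrite (nth_map 0) -?Hsz //.
  have Hin : nth 0 tau i \in tau by rewrite mem_nth -?Hsz.
  have [_] := Hiso _ _ Hi (index_lt _ Hin).
  by rewrite nth_index // eqxx eq_sym => /eqP.
exists msk; first exact: mem_bitseqs.
rewrite -Hmsk; apply/order_isoP; rewrite size_map; split => // i j Hi Hj.
have Hit : nth 0 tau i \in tau by rewrite mem_nth.
have Hjt : nth 0 tau j \in tau by rewrite mem_nth.
have Hle : {in tau &, {mono f : x y / x <= y}}.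
  by move=> x y Hx Hy; rewrite leqNgt Hf // -leqNgt.
by rewrite !(nth_map 0) // Hf // (inj_in_eq (incn_inj_in Hle)) // !eqxx.
Qed.

Ltac relabel_mono :=
  move=> x y; rewrite !inE => /or4P[]/eqP-> /or4P[]/eqP-> /=; apply/idP/idP; lia.

Lemma contains0121P s :
  reflect (exists a b c, [/\ a < b, b < c & subseq [:: a; b; c; b] s])
          (contains s [:: 0; 1; 2; 1]).
Proof.
apply: (iffP (containsP _ _)) => [[f Hf Hs]|[a [b [c [Hab Hbc Hs]]]]].
  by exists (f 0), (f 1), (f 2); rewrite !Hf.
by exists (nth 0 [:: a; b; c]); first relabel_mono.
Qed.

Lemma contains0122P s :
  reflect (exists a b c, [/\ a < b, b < c & subseq [:: a; b; c; c] s])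
          (contains s [:: 0; 1; 2; 2]).
Proof.
apply: (iffP (containsP _ _)) => [[f Hf Hs]|[a [b [c [Hab Hbc Hs]]]]].
  by exists (f 0), (f 1), (f 2); rewrite !Hf.
by exists (nth 0 [:: a; b; c]); first relabel_mono.
Qed.

Lemma contains0132P s :
  reflect (exists a b c d, [/\ a < b, b < c, c < d & subseq [:: a; b; d; c] s])
          (contains s [:: 0; 1; 3; 2]).
Proof.
apply: (iffP (containsP _ _)) => [[f Hf Hs]|[a [b [c [d [Hab Hbc Hcd Hs]]]]]].
  by exists (f 0), (f 1), (f 2), (f 3); rewrite !Hf.
by exists (nth 0 [:: a; b; c; d]); first relabel_mono.
Qed.

Lemma contains1032P s :
  reflect (exists a b c d, [/\ a < b, b < c, c < d & subseq [:: b; a; d; c] s])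
          (contains s [:: 1; 0; 3; 2]).
Proof.
apply: (iffP (containsP _ _)) => [[f Hf Hs]|[a [b [c [d [Hab Hbc Hcd Hs]]]]]].
  by exists (f 0), (f 1), (f 2), (f 3); rewrite !Hf.
by exists (nth 0 [:: a; b; c; d]); first relabel_mono.
Qed.

Lemma asc_rcons u x : u != [::] -> asc (rcons u x) = asc u + (last 0 u < x).
Proof.
case: u => // y u _; rewrite [last 0 _]/=.
elim: u y => [|z u IH] y /=; first by rewrite addn0 add0n.
by rewrite -/(rcons (z :: u) x) -!/(asc (z :: _)) IH; case: u IH => [|w u] IH //=; rewrite addnA.
Qed.

Lemma asc_rcons_ge u x : asc u <= asc (rcons u x).
Proof. by case: u => [//|y u]; rewrite asc_rcons ?leq_addr. Qed.

Lemma asc_size u : asc u <= (size u).-1.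
Proof.
elim: u => [|x [|y u] IH] //=.
by move: IH; rewrite /= => IH; case: (x < y) => /=; lia.
Qed.

Lemma ascent_seq1 x : is_ascent_seq [:: x] = (x == 0).
Proof. by rewrite /is_ascent_seq /= andbT. Qed.

Lemma ascent_seq_rcons u x : u != [::] ->
  is_ascent_seq (rcons u x) = is_ascent_seq u && (x <= (asc u).+1).
Proof.
case: u => // y u _; rewrite /is_ascent_seq size_rcons -andbA; congr (_ && _).
rewrite [size _]/= [_.+1.-1]/=.
have -> : iota 1 (size u).+1 = rcons (iota 1 (size u)) (size u).+1.
  by rewrite -[(size u).+1]addn1 iotaD cats1 add1n addn1.
rewrite all_rcons andbC; congr (_ && _); last first.
  rewrite -cats1 nth_cat [size (y :: u)]/= ltnn subnn.
  by rewrite -[(size u).+1]/(size (y :: u)) take_size_cat.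
apply: eq_in_all => i; rewrite mem_iota add1n => /andP[_ Hi].
by rewrite -cats1 nth_cat Hi takel_cat // ltnW.
Qed.

Lemma ascent_seq_prefix u v : u != [::] -> is_ascent_seq (u ++ v) -> is_ascent_seq u.
Proof.
move=> Hu; elim/last_ind: v => [|v x IH]; first by rewrite cats0.
rewrite -rcons_cat ascent_seq_rcons => [/andP[/IH]//|].
by case: u Hu IH.
Qed.

Lemma ascent_seq_head s : is_ascent_seq s -> exists s', s = 0 :: s'.
Proof. by case: s => // x s /andP[/eqP /= -> _]; exists s. Qed.

Lemma ascent_seq_cat_cons u x v : u != [::] -> is_ascent_seq (u ++ x :: v) ->
  x <= (asc u).+1.
Proof.
move=> Hu; rewrite -cat_rcons => /(ascent_seq_prefix (rcons_neq_nil u x)).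
by rewrite ascent_seq_rcons // => /andP[].
Qed.

Lemma ascent_seq_leq_asc s : is_ascent_seq s -> all (fun x => x <= (asc s).+1) s.
Proof.
elim/last_ind: s => [//|t x IH].
have [->|Ht] := eqVneq t [::]; first by rewrite ascent_seq1 /= => /eqP ->.
rewrite ascent_seq_rcons // all_rcons => /andP[/IH Hall Hx].
rewrite (leq_trans Hx) ?ltnS ?asc_rcons_ge //=.
by apply/allP => y /(allP Hall) /leq_trans; apply; rewrite ltnS asc_rcons_ge.
Qed.

Lemma ascent_seq_ltn_size s : is_ascent_seq s -> all (fun x => x < size s) s.
Proof.
elim/last_ind: s => [//|t x IH].
have [->|Ht] := eqVneq t [::]; first by rewrite ascent_seq1 /= => /eqP ->.
rewrite ascent_seq_rcons // all_rcons size_rcons => /andP[/IH Hall Hx].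
have : asc t < size t by case: t Ht {IH Hall Hx} => // y t _; have := asc_size (y :: t).
move=> Hasc; apply/andP; split; first lia.
by apply/allP => y /(allP Hall); lia.
Qed.

Lemma ascent_seq_asc0 t : is_ascent_seq t -> 1 \notin t -> asc t = 0.
Proof.
elim/last_ind: t => [//|t x IH].
have [->|Ht] := eqVneq t [::]; first by [].
rewrite ascent_seq_rcons // mem_rcons inE negb_or asc_rcons //.
case/andP=> Hs Hx /andP[Hx1 /(IH Hs) Hasc]; rewrite Hasc in Hx *.
by have -> : x = 0 by lia.
Qed.

(* The prefix before an entry [d > 1] must already have an ascent, hence a 1. *)
Lemma ascent_seq_subseq01 s d u : is_ascent_seq s -> 1 < d -> subseq (d :: u) s ->
  subseq [:: 0, 1, d & u] s.
Proof.
move=> Hs Hd /subseq_cons_cat [s1 [s2 [Es Hu]]]; subst s.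
have Hs1 : s1 != [::].
  by case: s1 Hs => //= /ascent_seq_head [s' [E _]]; move: Hd; rewrite E.
have Hasc : 0 < asc s1 by have := ascent_seq_cat_cons Hs1 Hs; lia.
have Hs1a := ascent_seq_prefix Hs1 Hs.
have H1 : 1 \in s1 by apply: contraLR Hasc => /(ascent_seq_asc0 Hs1a) ->.
have [s1' E1] := ascent_seq_head Hs1a; subst s1.
rewrite -[[:: 0, 1, d & u]]/([:: 0; 1] ++ d :: u); apply: cat_subseq.
  by rewrite /= sub1seq; move: H1; rewrite inE.
by rewrite /= eqxx.
Qed.

(** * Avoidance as monotonicity *)

Definition above k s := [seq x <- s | k < x].

Lemma subseq_above k x y s : k < x -> k < y ->
  subseq [:: x; y] (above k s) = subseq [:: x; y] s.
Proof. by move=> Hx Hy; rewrite subseq_filter /= Hx Hy. Qed.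

Lemma avoids0132_sorted s : is_ascent_seq s ->
  avoids s [:: 0; 1; 3; 2] = sorted leq (above 1 s).
Proof.
move=> Hs; apply/idP/idP => [Ha|Hso].
  apply/negPn/negP => /unsorted_pair [x [y [Hsub Hr]]].
  move: Hsub; rewrite subseq_filter /= andbT => /andP[/andP[Hx Hy] Hsub].
  move/negP: Ha; apply; apply/contains0132P.
  exists 0, 1, y, x; split => //; first lia.
  exact: ascent_seq_subseq01.
apply/negP => /contains0132P [a [b [c [d [Hab Hbc Hcd Hsub]]]]].
have /(sorted_pair leq_trans Hso) : subseq [:: d; c] (above 1 s).
  by rewrite subseq_above ?(subseq_trans (drop_subseq _ 2) Hsub) //; lia.
lia.
Qed.

Lemma avoids0122_0132_sorted s : is_ascent_seq s ->
  avoids s [:: 0; 1; 2; 2] && avoids s [:: 0; 1; 3; 2] = sorted ltn (above 1 s).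
Proof.
move=> Hs; rewrite avoids0132_sorted //; apply/idP/idP => [/andP[Ha Hso]|Hso].
  apply/negPn/negP => /unsorted_pair [x [y [Hsub Hr]]].
  have Exy : x = y by have := sorted_pair leq_trans Hso Hsub; lia.
  subst y; move: Hsub; rewrite subseq_filter /= andbT => /andP[/andP[Hx _] Hsub].
  move/negP: Ha; apply; apply/contains0122P.
  exists 0, 1, x; split => //; exact: ascent_seq_subseq01.
rewrite (sub_sorted _ Hso) ?andbT; last by move=> x y /ltnW.
apply/negP => /contains0122P [a [b [c [Hab Hbc Hsub]]]].
have /(sorted_pair ltn_trans Hso) : subseq [:: c; c] (above 1 s).
  by rewrite subseq_above ?(subseq_trans (drop_subseq _ 2) Hsub) //; lia.
by rewrite ltnn.
Qed.

Lemma avoids0121_0132_sorted s : is_ascent_seq s ->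
  avoids s [:: 0; 1; 2; 1] && avoids s [:: 0; 1; 3; 2] = sorted leq (above 0 s).
Proof.
move=> Hs; rewrite avoids0132_sorted //; apply/idP/idP => [/andP[Ha Hso]|Hso].
  apply/negPn/negP => /unsorted_pair [x [y [Hsub Hr]]].
  move: Hsub; rewrite subseq_filter /= andbT => /andP[/andP[Hx Hy] Hsub].
  have [Hy1|Hy1] := ltnP 1 y.
    have : x <= y by apply: (sorted_pair leq_trans Hso); rewrite subseq_above //; lia.
    by rewrite (negbTE Hr).
  have Ey : y = 1 by lia.
  subst y; move/negP: Ha; apply; apply/contains0121P.
  exists 0, 1, x; split => //; first lia.
  by apply: ascent_seq_subseq01 => //; lia.
have -> : above 1 s = [seq x <- above 0 s | 1 < x].
  by rewrite -filter_predI; apply: eq_filter => -[|[|x]].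
rewrite (sorted_filter leq_trans) // andbT.
apply/negP => /contains0121P [a [b [c [Hab Hbc Hsub]]]].
have /(sorted_pair leq_trans Hso) : subseq [:: c; b] (above 0 s).
  by rewrite subseq_above ?(subseq_trans (drop_subseq _ 2) Hsub) //; lia.
lia.
Qed.

(** * The patterns 0132 and 1032 *)

Lemma asc_sorted_leq x u : sorted leq (x :: u) -> asc (x :: u) + x <= last x u.
Proof.
elim: u x => [|y u IH] x //= /andP[Hxy /IH]; rewrite -/(asc (y :: u)).
by case: ltngtP Hxy => //= [Hlt|->] _; lia.
Qed.

(* Look at the first entry [e >= c]: if everything before it is weakly increasing,
   the ascent bound forces [e = c], so [c] already occurs before [d]; otherwise the
   prefix has a descent, all of whose entries are below [c]. *)
Lemma ascent_seq_cdc_or_1032 s c d : is_ascent_seq s -> 1 < c -> c < d ->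
  subseq [:: d; c] s ->
  subseq [:: c; d; c] s \/ exists a b, [/\ a < b, b < c & subseq [:: b; a; d; c] s].
Proof.
move=> Hs Hc Hcd Hsub.
have Hhas : has (fun z => c <= z) s.
  apply/hasP; exists d; last exact: ltnW.
  by apply: (mem_subseq Hsub); rewrite mem_head.
case: (split_find Hhas) Hs Hsub => e u w He /hasPn Hu Hs Hsub.
rewrite cat_rcons in Hs Hsub *.
have Hlt z : z \in u -> z < c by move=> /Hu /=; rewrite -ltnNge.
have Hdc : subseq [:: d; c] (e :: w).
  apply: subseq_cons_catr Hsub; apply/negP => /Hlt; lia.
have Hun : u != [::].
  apply: contraTneq Hs => ->; apply/negP => /ascent_seq_head [s' [Ee _]]; lia.
have [Hso|/unsorted_pair [x [y [Hxy /negbTE Hr]]]] := boolP (sorted leq u).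
  left; have [u' Eu] := ascent_seq_head (ascent_seq_prefix Hun Hs).
  have Hl : last 0 u' < c by apply: Hlt; rewrite Eu mem_last.
  have := ascent_seq_cat_cons Hun Hs.
  have := @asc_sorted_leq 0 u'; rewrite -Eu => /(_ Hso) Has He'.
  have Ee : e = c by lia.
  have Hdw : subseq [:: d; c] w.
    by move: Hdc; rewrite Ee /= eqn_leq leqNgt Hcd.
  by rewrite Ee; apply: (subseq_trans _ (suffix_subseq u _)); rewrite /= eqxx.
right; exists y, x; split.
- by rewrite ltnNge Hr.
- by apply: Hlt; apply: (mem_subseq Hxy); rewrite !inE eqxx.
by rewrite -[[:: x; y; d; c]]/([:: x; y] ++ [:: d; c]); apply: cat_subseq.
Qed.

Lemma avoids0132_1032 s : is_ascent_seq s ->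
  avoids s [:: 0; 1; 2; 1] || avoids s [:: 0; 1; 2; 2] ->
  avoids s [:: 0; 1; 3; 2] = avoids s [:: 1; 0; 3; 2].
Proof.
move=> Hs Hav; apply/idP/idP; apply: contraNN.
  case/contains1032P => [a [b [c [d [Hab Hbc Hcd Hsub]]]]].
  apply/contains0132P; exists 0, 1, c, d; split => //; try lia.
  apply: ascent_seq_subseq01 => //; first lia.
  exact: subseq_trans (drop_subseq _ 2) Hsub.
case/contains0132P => [a [b [c [d [Hab Hbc Hcd Hsub]]]]].
have Hc : 1 < c by lia.
have Hdc : subseq [:: d; c] s := subseq_trans (drop_subseq _ 2) Hsub.
have [Hcdc|[a' [b' [Hab' Hbc' Hsub']]]] := ascent_seq_cdc_or_1032 Hs Hc Hcd Hdc.
  have H01cdc := ascent_seq_subseq01 Hs Hc Hcdc.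
  case/orP: Hav => /negP[].
    apply/contains0121P; exists 0, c, d; split; try lia.
    exact: subseq_trans (cat_subseq (subseq_refl [:: 0]) (subseq_cons _ 1)) H01cdc.
  apply/contains0122P; exists 0, 1, c; split; try lia.
  exact: subseq_trans (cat_subseq (subseq_refl [:: 0; 1; c]) (subseq_cons _ d)) H01cdc.
by apply/contains1032P; exists a', b', c, d.
Qed.

(** * Raising and lowering ones *)

Ltac case_ifs_lia :=
  repeat match goal with H : context [if _ then _ else _] |- _ => revert H end;
  repeat match goal with |- context [if ?b then _ else _] => case: (boolP b) end;
  intros; try lia.

Definition top t := last 0 (above 1 t).

Lemma top_rcons t x : top (rcons t x) = if 1 < x then x else top t.
Proof. by rewrite /top /above filter_rcons; case: ifP => // _; rewrite last_rcons. Qed.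

Lemma top_eq0_or_gt1 t : top t = 0 \/ 1 < top t.
Proof.
elim/last_ind: t => [|t x IH]; first by left.
by rewrite top_rcons; case: ifP => //; right.
Qed.

Lemma top_mem t : 1 < top t -> top t \in above 1 t.
Proof. by rewrite /top; case/predU1P: (mem_last 0 (above 1 t)) => [->|]. Qed.

Fixpoint relabel (f : nat -> nat -> nat) (h : nat) (s : seq nat) : seq nat :=
  if s is x :: s' then f h x :: relabel f (if 1 < x then x else h) s' else [::].

Lemma relabel_rcons f h t x :
  relabel f h (rcons t x) = rcons (relabel f h t) (f (last h (above 1 t)) x).
Proof. by elim: t h => [|y t IH] h //=; rewrite IH /above /=; case: ifP. Qed.

Lemma size_relabel f h s : size (relabel f h s) = size s.
Proof. by elim: s h => [|x s IH] h //=; rewrite IH. Qed.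

(* A 1 seen after an entry [h > 1] becomes a repeat of [h], and conversely. *)
Definition raise_one h x := if (x == 1) && (1 < h) then h else x.
Definition lower_one h x := if (1 < x) && (x == h) then 1 else x.

Definition raise_ones := relabel raise_one 0.
Definition lower_ones := relabel lower_one 0.

Lemma raise_ones_rcons t x :
  raise_ones (rcons t x) = rcons (raise_ones t) (raise_one (top t) x).
Proof. exact: relabel_rcons. Qed.

Lemma lower_ones_rcons t x :
  lower_ones (rcons t x) = rcons (lower_ones t) (lower_one (top t) x).
Proof. exact: relabel_rcons. Qed.

Lemma top_raise_ones t : top (raise_ones t) = top t.
Proof.
elim/last_ind: t => [//|t x IH].
rewrite raise_ones_rcons !top_rcons IH /raise_one.
case: (top_eq0_or_gt1 t) => ->; case_ifs_lia.
Qed.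

Lemma top_lower_ones t : top (lower_ones t) = top t.
Proof.
elim/last_ind: t => [//|t x IH].
by rewrite lower_ones_rcons !top_rcons IH /lower_one; case_ifs_lia.
Qed.

Lemma sorted_above1_rcons t x :
  sorted ltn (above 1 (rcons t x)) = sorted ltn (above 1 t) && ((1 < x) ==> (top t < x)).
Proof.
rewrite /top /above filter_rcons; case: ifP => Hx /=; last by rewrite andbT.
case: [seq y <- t | 1 < y] => [|y l]; first by rewrite /= ltnW.
by rewrite rcons_cons [sorted _ (_ :: _)]/= rcons_path.
Qed.

Lemma sorted_above0_rcons t x : sorted leq (above 0 (rcons t x)) ->
  sorted leq (above 0 t) /\ (0 < x -> top t <= x).
Proof.
rewrite /above filter_rcons; case: ifP => Hx; last by move=> Hs; split => //; rewrite Hx.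
rewrite !(sorted_pairwise leq_trans) pairwise_rcons => /andP[/allP Hall Hs]; split => // _.
have [->//|Htop] := top_eq0_or_gt1 t; apply: Hall.
by move: (top_mem Htop); rewrite !mem_filter => /andP[_ ->]; rewrite andbT; lia.
Qed.

Lemma raise_oneK h x : (1 < x -> h < x) ->
  lower_one h (raise_one h x) = x.
Proof. by rewrite /lower_one /raise_one; case_ifs_lia. Qed.

Lemma lower_oneK h x : (0 < x -> h <= x) ->
  raise_one h (lower_one h x) = x.
Proof. by rewrite /lower_one /raise_one; case_ifs_lia. Qed.

Lemma raise_one_ltn h z x :
  (1 < z -> h < z) -> (1 < x -> (if 1 < z then z else h) < x) ->
  (raise_one h z < raise_one (if 1 < z then z else h) x) = (z < x).
Proof. by rewrite /raise_one => Hz Hx; apply/idP/idP; case_ifs_lia. Qed.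

Lemma lower_one_ltn h z x :
  (0 < z -> h <= z) -> (0 < x -> (if 1 < z then z else h) <= x) ->
  (lower_one h z < lower_one (if 1 < z then z else h) x) = (z < x).
Proof. by rewrite /lower_one => Hz Hx; apply/idP/idP; case_ifs_lia. Qed.

Lemma raise_onesK s : sorted ltn (above 1 s) -> lower_ones (raise_ones s) = s.
Proof.
elim/last_ind: s => [//|t x IH]; rewrite sorted_above1_rcons => /andP[/IH {}IH /implyP Hx].
by rewrite raise_ones_rcons lower_ones_rcons top_raise_ones IH raise_oneK.
Qed.

Lemma lower_onesK s : sorted leq (above 0 s) -> raise_ones (lower_ones s) = s.
Proof.
elim/last_ind: s => [//|t x IH] /sorted_above0_rcons [/IH {}IH Hx].
by rewrite lower_ones_rcons raise_ones_rcons top_lower_ones IH lower_oneK.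
Qed.

Lemma raise_ones_neq_nil t : t != [::] -> raise_ones t != [::].
Proof. by rewrite -!size_eq0 size_relabel. Qed.

Lemma lower_ones_neq_nil t : t != [::] -> lower_ones t != [::].
Proof. by rewrite -!size_eq0 size_relabel. Qed.

Lemma asc_raise_ones s : sorted ltn (above 1 s) -> asc (raise_ones s) = asc s.
Proof.
elim/last_ind: s => [//|t x IH]; rewrite sorted_above1_rcons => /andP[Ht /implyP Hx].
case/lastP: t IH Ht Hx => [//|t z] IH Ht Hx.
move: (Ht); rewrite sorted_above1_rcons => /andP[_ /implyP Hz].
rewrite raise_ones_rcons asc_rcons ?raise_ones_neq_nil ?rcons_neq_nil //.
rewrite [in RHS]asc_rcons ?rcons_neq_nil // IH //.
by rewrite raise_ones_rcons !last_rcons top_rcons raise_one_ltn // -top_rcons.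
Qed.

Lemma asc_lower_ones s : sorted leq (above 0 s) -> asc (lower_ones s) = asc s.
Proof.
elim/last_ind: s => [//|t x IH] /[dup] /sorted_above0_rcons [Ht Hx].
case/lastP: t IH Ht Hx => [//|t z] IH Ht Hx _.
have [_ Hz] := sorted_above0_rcons Ht.
rewrite lower_ones_rcons asc_rcons ?lower_ones_neq_nil ?rcons_neq_nil //.
rewrite [in RHS]asc_rcons ?rcons_neq_nil // IH //.
by rewrite lower_ones_rcons !last_rcons top_rcons lower_one_ltn // -top_rcons.
Qed.

Lemma ascent_seq_raise_ones s : is_ascent_seq s -> sorted ltn (above 1 s) ->
  is_ascent_seq (raise_ones s).
Proof.
elim/last_ind: s => [//|t x IH].
have [->|Ht] := eqVneq t [::]; first by rewrite ascent_seq1 => /eqP ->.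
rewrite ascent_seq_rcons // sorted_above1_rcons => /andP[Hs Hx] /andP[Hso _].
rewrite raise_ones_rcons ascent_seq_rcons ?raise_ones_neq_nil // IH //.
rewrite asc_raise_ones // /raise_one; case: ifP => // /andP[_ Htop].
exact: (allP (ascent_seq_leq_asc Hs)) _ (mem_subseq (filter_subseq _ _) (top_mem Htop)).
Qed.

Lemma ascent_seq_lower_ones s : is_ascent_seq s -> sorted leq (above 0 s) ->
  is_ascent_seq (lower_ones s).
Proof.
elim/last_ind: s => [//|t x IH].
have [->|Ht] := eqVneq t [::]; first by rewrite ascent_seq1 => /eqP ->.
rewrite ascent_seq_rcons // => /andP[Hs Hx] /sorted_above0_rcons [Hso _].
rewrite lower_ones_rcons ascent_seq_rcons ?lower_ones_neq_nil // IH //.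
by rewrite asc_lower_ones // /lower_one; case: ifP.
Qed.

Lemma last_above0_raise_ones t : last 0 (above 0 (raise_ones t)) <= maxn 1 (top t).
Proof.
elim/last_ind: t => [//|t x IH].
rewrite raise_ones_rcons /above filter_rcons top_rcons.
have := top_eq0_or_gt1 t; case: ifP => Hy; first rewrite last_rcons.
  by move: Hy; rewrite /raise_one; case_ifs_lia.
by move: Hy IH; rewrite /raise_one; case_ifs_lia.
Qed.

Lemma raise_ones_sorted s : sorted ltn (above 1 s) -> sorted leq (above 0 (raise_ones s)).
Proof.
elim/last_ind: s => [//|t x IH]; rewrite sorted_above1_rcons => /andP[/IH {}IH /implyP Hx].
rewrite raise_ones_rcons /above filter_rcons; case: ifP => // Hy.
rewrite sorted_leq_rcons IH (leq_trans (last_above0_raise_ones t)) //.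
by have := top_eq0_or_gt1 t; move: Hy Hx; rewrite /raise_one; case_ifs_lia.
Qed.

Lemma lower_ones_sorted s : sorted leq (above 0 s) -> sorted ltn (above 1 (lower_ones s)).
Proof.
elim/last_ind: s => [//|t x IH] /sorted_above0_rcons [/IH {}IH Hx].
rewrite lower_ones_rcons sorted_above1_rcons IH top_lower_ones /=.
by apply/implyP; move: Hx; rewrite /lower_one; case_ifs_lia.
Qed.

Lemma mem_Snm_set n m T s : (s \in Snm_set n m T) =
  [&& size s == n, is_ascent_seq s, asc s == m & all (avoids s) T].
Proof.
rewrite mem_filter mem_all_seqs.
have [Hs|] := boolP (is_ascent_seq s); last by rewrite !andbF.
have [Hn|] := eqVneq (size s) n; last by rewrite andbF.
by rewrite -Hn ascent_seq_ltn_size //= andbT.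
Qed.

Lemma eq_Snm n m T1 T2 :
  (forall s, is_ascent_seq s -> all (avoids s) T1 = all (avoids s) T2) ->
  Snm n m T1 = Snm n m T2.
Proof.
move=> HT; rewrite /Snm /Snm_set; congr size; apply: eq_filter => s.
by have [/HT ->|] := boolP (is_ascent_seq s).
Qed.

Lemma Snm_0121_0122 n m :
  Snm n m [:: [:: 0; 1; 2; 1]; [:: 0; 1; 3; 2]] = Snm n m [:: [:: 0; 1; 2; 2]; [:: 0; 1; 3; 2]].
Proof.
have memI s : (s \in Snm_set n m [:: [:: 0; 1; 2; 1]; [:: 0; 1; 3; 2]]) =
    [&& size s == n, is_ascent_seq s, asc s == m & sorted leq (above 0 s)].
  rewrite mem_Snm_set /= andbT; have [Hs|] := boolP (is_ascent_seq s); last by rewrite !andbF.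
  by rewrite avoids0121_0132_sorted.
have memII s : (s \in Snm_set n m [:: [:: 0; 1; 2; 2]; [:: 0; 1; 3; 2]]) =
    [&& size s == n, is_ascent_seq s, asc s == m & sorted ltn (above 1 s)].
  rewrite mem_Snm_set /= andbT; have [Hs|] := boolP (is_ascent_seq s); last by rewrite !andbF.
  by rewrite avoids0122_0132_sorted.
apply: (@eq_size_bij_in _ _ _ lower_ones raise_ones); rewrite ?filter_uniq ?uniq_all_seqs //.
- move=> s; rewrite memI memII => /and4P[Hn Hs Hm Hso].
  by rewrite size_relabel Hn ascent_seq_lower_ones // asc_lower_ones // Hm lower_ones_sorted.
- move=> s; rewrite memI memII => /and4P[Hn Hs Hm Hso].
  by rewrite size_relabel Hn ascent_seq_raise_ones // asc_raise_ones // Hm raise_ones_sorted.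
- by move=> s; rewrite memI => /and4P[_ _ _ /lower_onesK].
by move=> s; rewrite memII => /and4P[_ _ _ /raise_onesK].
Qed.

Lemma Snm_0132_1032 n m p : p \in [:: [:: 0; 1; 2; 1]; [:: 0; 1; 2; 2]] ->
  Snm n m [:: p; [:: 0; 1; 3; 2]] = Snm n m [:: p; [:: 1; 0; 3; 2]].
Proof.
move=> Hp; apply: eq_Snm => s Hs /=; have [Ha|] := boolP (avoids s p); last by [].
rewrite avoids0132_1032 //.
by move: Hp; rewrite !inE => /orP[]/eqP Ep; rewrite -Ep Ha ?orbT.
Qed.

Theorem proposition2 (n m : nat) :
  1 <= n -> m < n ->
  [/\ Snm n m [:: [:: 0; 1; 2; 1]; [:: 0; 1; 3; 2]] = Snm n m [:: [:: 0; 1; 2; 1]; [:: 1; 0; 3; 2]],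
      Snm n m [:: [:: 0; 1; 2; 1]; [:: 1; 0; 3; 2]] = Snm n m [:: [:: 0; 1; 2; 2]; [:: 0; 1; 3; 2]] &
      Snm n m [:: [:: 0; 1; 2; 2]; [:: 0; 1; 3; 2]] = Snm n m [:: [:: 0; 1; 2; 2]; [:: 1; 0; 3; 2]]].
Proof.
move=> _ _.
rewrite -(@Snm_0132_1032 n m [:: 0; 1; 2; 1]) // -(@Snm_0132_1032 n m [:: 0; 1; 2; 2]) //.
by rewrite Snm_0121_0122.
Qed.
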